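(* Let $u\in\mathbb{N}$, $u\geq 2$, let $l_1,\dots,l_u$ be non-negative integers, and let $M:=\max\{l_j:j=1,\dots,u\}$. Then the minimal value $K$ for which there exists a well distributing matrix $\mathcal{K}\in\{0,1\}^{u\times K}$ is $$\max\Bigl\{M,\Bigl\lceil\tfrac{1}{u-1}\sum_{i=1}^u l_i\Bigr\rceil\Bigr\}.$$
   Context: Given $u,K\in\mathbb{N}$ and non-negative integers $l_1,\dots,l_u$, a matrix $\mathcal{K}\in\{0,1\}^{u\times K}$ is well distributing if (i) $\sum_{j=1}^K\mathcal{K}_{i,j}=l_i$ for all $i=1,\dots,u$, and (ii) $1\le\sum_{i=1}^u\mathcal{K}_{i,j}\le u-1$ for all $j=1,\dots,K$. *)

From mathcomp Require Import all_boot all_algebra.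
Set Implicit Arguments. Unset Strict Implicit. Unset Printing Implicit Defensive.

(* A 0/1 matrix is a boolean matrix 'M[bool]_(u, K); entry true = 1. *)

Definition row_sum (u K : nat) (A : 'M[bool]_(u, K)) (i : 'I_u) : nat :=
  \sum_(j < K) (A i j : nat).

Definition col_sum (u K : nat) (A : 'M[bool]_(u, K)) (j : 'I_K) : nat :=
  \sum_(i < u) (A i j : nat).

Definition well_distributing (u K : nat) (l : 'I_u -> nat) (A : 'M[bool]_(u, K)) : Prop :=
  (forall i : 'I_u, row_sum A i = l i) /\
  (forall j : 'I_K, 1 <= col_sum A j <= u - 1).

Definition ceil_div (m d : nat) : nat := (m + d.-1) %/ d.

From mathcomp Require Import all_boot all_algebra zify.

(* Necessity: a row has at most K ones, and counting the ones column by
   column gives sum l <= K (u - 1).  Sufficiency (McNaughton's wrap-around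
   rule): write the ones of row 1, then row 2, ... at consecutive positions
   0, 1, ..., sum l - 1 and put position p in column p mod K.  A row then
   occupies l_i <= K consecutive positions, hence distinct columns, and
   column j receives the positions p < sum l with p = j (mod K): at least
   one because j < K <= sum l, and at most u - 1 because sum l <= K (u - 1). *)

Lemma sum_modn_eq_over_residues (K p : nat) :
  0 < K -> \sum_(j < K) (p %% K == j : nat) = 1.
Proof.
move=> K_gt0; rewrite (bigD1 (Ordinal (ltn_pmod p K_gt0))) //= eqxx big1 // => j.
move=> neq_j; suff /negbTE -> : p %% K != j by [].
by apply: contra neq_j => /eqP pK; apply/eqP/val_inj.
Qed.

Lemma sum_modn_eq_window (K j a : nat) :
  j < K -> \sum_(a <= p < a + K) (p %% K == j : nat) = 1.
Proof.
move=> ltjK; elim: a => [|a IHa].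
  rewrite add0n big_mkord (bigD1 (Ordinal ltjK)) //= modn_small // eqxx big1 //.
  move=> i neq_ij; rewrite modn_small //; suff /negbTE -> : (i : nat) != j by [].
  by apply: contra neq_ij => /eqP eq_ij; apply/eqP/val_inj.
have lt_a_aK : a < a + K by rewrite -addn1 leq_add2l (leq_trans _ ltjK).
rewrite -IHa addSn big_nat_recr //= modnDr.
by rewrite [RHS]big_ltn //= addnC.
Qed.

Lemma sum_modn_eq_short_window (K j a n : nat) :
  j < K -> n <= K -> \sum_(a <= p < a + n) (p %% K == j : nat) <= 1.
Proof.
move=> ltjK le_nK; rewrite -(sum_modn_eq_window K j a ltjK).
by rewrite [leqRHS](@big_cat_nat _ _ _ (a + n)) ?leq_addr ?leq_add2l.
Qed.

Lemma sum_modn_eq_mul (K j m : nat) :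
  j < K -> \sum_(0 <= p < K * m) (p %% K == j : nat) = m.
Proof.
move=> ltjK; elim: m => [|m IHm]; first by rewrite muln0 big_geq.
rewrite mulnS addnC (@big_cat_nat _ _ _ (K * m)) ?leq_addr //=.
by rewrite IHm sum_modn_eq_window // addn1.
Qed.

Lemma sum_big_nat_consecutive (F L : nat -> nat) (n : nat) :
  \sum_(i < n) \sum_(\sum_(k < i) L k <= p < \sum_(k < i) L k + L i) F p
  = \sum_(0 <= p < \sum_(i < n) L i) F p.
Proof.
elim: n => [|n IHn]; first by rewrite !big_ord0 big_geq.
rewrite !big_ord_recr /= IHn.
by rewrite [RHS](@big_cat_nat _ _ _ (\sum_(i < n) L i)) ?leq_addr.
Qed.

Lemma leq_ceil_div_mul (m d : nat) : 0 < d -> m <= ceil_div m d * d.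
Proof.
move=> d_gt0; rewrite /ceil_div.
have := divn_eq (m + d.-1) d; have := ltn_pmod (m + d.-1) d_gt0; lia.
Qed.

Lemma ceil_div_leq (m d K : nat) : 0 < d -> m <= K * d -> ceil_div m d <= K.
Proof.
move=> d_gt0 le_m_Kd; rewrite /ceil_div.
have : (m + d.-1) %/ d <= (K * d + d.-1) %/ d by rewrite leq_div2r ?leq_add2r.
rewrite divnMDl // (@divn_small d.-1 d) ?addn0 //; lia.
Qed.

Lemma ceil_div_leq_self (m d : nat) : 0 < d -> ceil_div m d <= m.
Proof. by move=> d_gt0; rewrite ceil_div_leq ?leq_pmulr. Qed.

Lemma row_sum_leq (u K : nat) (A : 'M[bool]_(u, K)) (i : 'I_u) : row_sum A i <= K.
Proof.
rewrite /row_sum -[leqRHS]card_ord -sum1_card.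
by apply: leq_sum => j _; apply: leq_b1.
Qed.

Lemma sum_row_sum (u K : nat) (A : 'M[bool]_(u, K)) :
  \sum_(i < u) row_sum A i = \sum_(j < K) col_sum A j.
Proof. exact: exchange_big. Qed.

Lemma well_distributing_size (u K : nat) (l : 'I_u -> nat) (A : 'M[bool]_(u, K)) :
  well_distributing l A ->
  (forall i, l i <= K) /\ \sum_(i < u) l i <= K * (u - 1).
Proof.
move=> [rowA colA]; split=> [i|]; first by rewrite -rowA row_sum_leq.
rewrite (eq_bigr _ (fun i _ => esym (rowA i))) sum_row_sum.
rewrite -[K in K * _]card_ord -sum_nat_const.
by apply: leq_sum => j _; case/andP: (colA j).
Qed.

Section WrapAround.

Variables (u K : nat) (l : 'I_u -> nat).
Hypothesis l_leq : forall i, l i <= K.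

Let S := \sum_(i < u) l i.

(* [l] extended by 0 beyond u, so that row i starts at a plain prefix sum. *)
Let L (k : nat) : nat := oapp l 0 (insub k).

Let LE (i : 'I_u) : L i = l i.
Proof. by rewrite /L valK. Qed.

Let start (i : nat) : nat := \sum_(k < i) L k.

Definition wrap_mx : 'M[bool]_(u, K) :=
  \matrix_(i, j) (0 < \sum_(start i <= p < start i + l i) (p %% K == j : nat)).

Lemma wrap_mxE i j :
  (wrap_mx i j : nat) = \sum_(start i <= p < start i + L i) (p %% K == j : nat).
Proof.
rewrite mxE LE.
have := sum_modn_eq_short_window K j (start i) _ (ltn_ord j) (l_leq i).
by case: (\sum_(_ <= _ < _) _) => [|[|]].
Qed.

Lemma row_sum_wrap_mx i : row_sum wrap_mx i = l i.
Proof.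
rewrite /row_sum (eq_bigr _ (fun j _ => wrap_mxE i j)) exchange_big /= LE.
rewrite (@eq_big_nat _ _ _ _ _ _ (fun _ => 1)) ?sum_nat_const_nat ?muln1 ?addKn //.
move=> p /andP[le_start_p lt_p_end]; apply: sum_modn_eq_over_residues.
apply: leq_trans (l_leq i).
by rewrite -(ltn_add2l (start i)) addn0 (leq_ltn_trans le_start_p).
Qed.

Lemma col_sum_wrap_mx j : col_sum wrap_mx j = \sum_(0 <= p < S) (p %% K == j : nat).
Proof.
rewrite /col_sum (eq_bigr _ (fun i _ => wrap_mxE i j)) sum_big_nat_consecutive.
by congr (\sum_(0 <= p < _) _); apply: eq_bigr => i _; rewrite LE.
Qed.

Lemma well_distributing_wrap_mx :
  K <= S -> S <= K * (u - 1) -> well_distributing l wrap_mx.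
Proof.
move=> le_K_S le_S_Ku; split=> [|j]; first exact: row_sum_wrap_mx.
have ltjK := ltn_ord j; have ltjS := leq_trans ltjK le_K_S.
rewrite col_sum_wrap_mx; apply/andP; split.
  rewrite (@big_cat_nat _ _ _ j) ?(ltnW ltjS) //= [X in _ + X]big_ltn //=.
  by rewrite modn_small // eqxx addnCA leq_addr.
rewrite -(sum_modn_eq_mul K j (u - 1) ltjK).
by rewrite [leqRHS](@big_cat_nat _ _ _ S) //= leq_addr.
Qed.

End WrapAround.

Theorem lemma9 (u : nat) (hu : 2 <= u) (l : 'I_u -> nat) :
  let M := \max_(i < u) l i in
  let K0 := maxn M (ceil_div (\sum_(i < u) l i) (u - 1)) in
  (exists A : 'M[bool]_(u, K0), well_distributing l A) /\
  (forall (K : nat) (A : 'M[bool]_(u, K)), well_distributing l A -> K0 <= K).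
Proof.
move=> M K0; set S := \sum_(i < u) l i.
have d_gt0 : 0 < u - 1 by rewrite subn_gt0.
have l_leq_M i : l i <= M := leq_bigmax i.
split.
  exists (wrap_mx u K0 l); apply: well_distributing_wrap_mx.
  - by move=> i; rewrite (leq_trans (l_leq_M i)) ?leq_maxl.
  - rewrite geq_max ceil_div_leq_self // andbT.
    by apply/bigmax_leqP => i _; rewrite /S (bigD1 i) //= leq_addr.
  - by rewrite (leq_trans (leq_ceil_div_mul S (u - 1) d_gt0)) // leq_mul2r leq_maxr orbT.
move=> K A /well_distributing_size [l_leq_K le_S_Ku].
rewrite geq_max (ceil_div_leq _ _ _ d_gt0 le_S_Ku) andbT.
by apply/bigmax_leqP => i _; apply: l_leq_K.
Qed.
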